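(* Let $V$ be a real sequence with $\liminf_{n\to\infty}V_n>C>0$, and let $G_{jk}=\psi^+_{\min(j,k)}\psi^-_{\max(j,k)}$ be a Green matrix for $(-\Delta+V)\psi=0$, where $\psi^-$ is a nonzero solution square-summable at infinity and $\psi^+$ is a solution with $\psi^-_n\psi^+_{n+1}-\psi^-_{n+1}\psi^+_n=1$. Define $$K_A:=\sqrt{1+\left(\frac{2}{C(C+2)}\right)^2}+\frac{2}{C(C+2)}.$$ Then for $n$ sufficiently large, $$\frac{1}{V_n+2}\le G_{nn}\le\frac{K_A}{V_n+2},$$ and consequently, with $z_n=\sqrt{G_{nn}}$ and $S^{[z]}_n=\frac{1+\sqrt{1+4z_n^2z_{n-1}^2}}{2z_nz_{n-1}}$, $$\frac{\sqrt{(V_n+2)(V_{n-1}+2)}+\sqrt{4+(V_n+2)(V_{n-1}+2)}}{2K_A}\le S^{[z]}_n\le\frac{\sqrt{(V_n+2)(V_{n-1}+2)}+\sqrt{4+(V_n+2)(V_{n-1}+2)}}{2}.$$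
   Context: $(\Delta f)_n=f_{n+1}+f_{n-1}-2f_n$; $(-\Delta+V)\psi=0$ means $-\psi_{n+1}-\psi_{n-1}+(2+V_n)\psi_n=0$. *)

From Stdlib Require Import Reals Lra.
From Coquelicot Require Import Coquelicot.
Open Scope R_scope.

Definition is_solution (V psi : nat -> R) : Prop :=
  forall n : nat, (1 <= n)%nat ->
    - psi (S n) - psi (n - 1)%nat + (2 + V n) * psi n = 0.

Definition green (psip psim : nat -> R) (j k : nat) : R :=
  psip (Nat.min j k) * psim (Nat.max j k).

Definition K_A (C : R) : R :=
  sqrt (1 + (2 / (C * (C + 2))) ^ 2) + 2 / (C * (C + 2)).

Definition zseq (psip psim : nat -> R) (n : nat) : R := sqrt (green psip psim n n).

Definition Sz (psip psim : nat -> R) (n : nat) : R :=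
  let z := zseq psip psim n in
  let z' := zseq psip psim (n - 1)%nat in
  (1 + sqrt (1 + 4 * z ^ 2 * z' ^ 2)) / (2 * z * z').

(* Eventually V_n > C > 0, so a solution which is positive at site n+1 and does not
   decrease from n to n+1 keeps increasing.  Hence the square-summable psi^- is
   eventually of one sign (say positive) and decreasing, and the Wronskian then forces
   psi^+ to become positive and eventually increasing; by the equation both decay and
   growth happen at least by the factor 1 + C.  The equation and the Wronskian give
     (V_n + 2) G_nn = 1 + psi^+_n psi^-_{n+1} + psi^-_n psi^+_{n-1},
   where both extra terms are nonnegative and at most G_nn / (1 + C); this yields
   1 <= (V_n + 2) G_nn <= 1 + 2 / (C (C + 3)) <= K_A.  The bounds on S^[z] follow since
   (1 + sqrt (1 + 4 s^2)) / (2 s) is decreasing in s = z_n z_{n-1}. *)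
From Stdlib Require Import Reals Lra Lia Classical.
From Coquelicot Require Import Coquelicot.
Open Scope R_scope.

Lemma eventually_gt_of_LimInf_gt (u : nat -> R) (c : R) :
  Rbar_lt c (LimInf_seq u) -> exists N, forall n, (N <= n)%nat -> c < u n.
Proof.
  intros Hc. destruct (ex_LimInf_seq u) as [l Hl].
  rewrite (is_LimInf_seq_unique _ _ Hl) in Hc.
  destruct l as [l| |]; simpl in *.
  - assert (He : 0 < l - c) by lra.
    destruct (Hl (mkposreal _ He)) as [_ [N HN]].
    exists N; intros n Hn; specialize (HN n Hn); simpl in HN; lra.
  - destruct (Hl c) as [N HN]; exists N; auto.
  - contradiction.
Qed.

Lemma is_lim_seq_0_eventually_lt (u : nat -> R) (e : R) :
  is_lim_seq u 0 -> 0 < e -> exists N, forall n, (N <= n)%nat -> u n < e.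
Proof.
  intros Hu He. apply is_lim_seq_spec in Hu.
  destruct (Hu (mkposreal _ He)) as [N HN]. exists N; intros n Hn.
  specialize (HN n Hn); simpl in HN. rewrite Rminus_0_r in HN.
  apply Rabs_def2 in HN. lra.
Qed.

Lemma le_from_nondecreasing (f : nat -> R) (m : nat) :
  (forall n, (m <= n)%nat -> f n <= f (S n)) ->
  forall n, (m <= n)%nat -> f m <= f n.
Proof.
  intros Hf n Hn; induction Hn as [|n Hn IH]; [lra|].
  specialize (Hf n Hn); lra.
Qed.

Lemma no_inverse_lower_bound (u f : nat -> R) (N : nat) :
  is_lim_seq (fun n => u n ^ 2) 0 ->
  (forall n, (N <= n)%nat -> 0 <= u n) ->
  (forall n, (N <= n)%nat -> f (S n) <= f n) ->
  ~ (forall n, (N <= n)%nat -> 1 <= u n * f n).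
Proof.
  intros Hu Hpos Hf Hinv.
  assert (Hle : forall n, (N <= n)%nat -> f n <= f N).
  { intros n Hn.
    assert (X := le_from_nondecreasing (fun k => - f k) N
                   ltac:(intros k Hk; specialize (Hf k Hk); lra) n Hn).
    simpl in X; lra. }
  assert (HfN : 0 < f N).
  { specialize (Hinv N (le_n N)). specialize (Hpos N (le_n N)).
    destruct (Rlt_le_dec 0 (f N)); [auto | nra]. }
  destruct (is_lim_seq_0_eventually_lt _ (/ f N ^ 2) Hu
              ltac:(apply Rinv_0_lt_compat; nra)) as [M HM].
  set (n := (M + N)%nat).
  specialize (HM n ltac:(unfold n; lia)).
  specialize (Hinv n ltac:(unfold n; lia)). specialize (Hpos n ltac:(unfold n; lia)).
  specialize (Hle n ltac:(unfold n; lia)).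
  assert (Hun : / f N <= u n).
  { apply (Rmult_le_reg_r (f N)); [lra|]. rewrite Rinv_l by lra. nra. }
  assert (/ f N ^ 2 <= u n ^ 2).
  { replace (/ f N ^ 2) with ((/ f N) ^ 2) by (field; lra).
    assert (0 < / f N) by (apply Rinv_0_lt_compat; lra). nra. }
  lra.
Qed.

Lemma is_solution_step (V psi : nat -> R) :
  is_solution V psi -> forall n, psi (S (S n)) = (2 + V (S n)) * psi (S n) - psi n.
Proof.
  intros Hs n. specialize (Hs (S n) ltac:(lia)).
  replace (S n - 1)%nat with n in Hs by lia. lra.
Qed.

Lemma is_solution_opp (V psi : nat -> R) :
  is_solution V psi -> is_solution V (fun n => - psi n).
Proof. intros Hs n Hn; specialize (Hs n Hn); lra. Qed.

Lemma solution_growth_factor (V psi : nat -> R) (n : nat) :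
  is_solution V psi -> psi n <= psi (S n) -> (1 + V (S n)) * psi (S n) <= psi (S (S n)).
Proof. intros Hs Hle; rewrite (is_solution_step V psi Hs); lra. Qed.

Lemma solution_decay_factor (V psi : nat -> R) (n : nat) :
  is_solution V psi -> psi (S (S n)) <= psi (S n) -> (1 + V (S n)) * psi (S n) <= psi n.
Proof. intros Hs Hle; rewrite (is_solution_step V psi Hs) in Hle; lra. Qed.

Section NonnegativePotential.

Variables (V : nat -> R) (N : nat).
Hypothesis V_nonneg : forall n, (N <= n)%nat -> 0 <= V n.

Lemma solution_nondecreasing (psi : nat -> R) (m : nat) :
  is_solution V psi -> (N <= m)%nat -> 0 < psi (S m) -> psi m <= psi (S m) ->
  forall n, (m <= n)%nat -> 0 < psi (S n) /\ psi n <= psi (S n).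
Proof.
  intros Hs Hm Hpos Hle n Hn; induction Hn as [|n Hn [IH1 IH2]]; [auto|].
  assert (X := solution_growth_factor V psi n Hs IH2).
  assert (HV := V_nonneg (S n) ltac:(lia)).
  split; nra.
Qed.

Lemma decaying_solution_decreases (psi : nat -> R) (m : nat) :
  is_solution V psi -> is_lim_seq (fun n => psi n ^ 2) 0 ->
  (N <= m)%nat -> 0 < psi (S m) -> psi (S m) < psi m.
Proof.
  intros Hs Hl Hm Hpos.
  destruct (Rlt_le_dec (psi (S m)) (psi m)) as [Hlt|Hle]; [exact Hlt|exfalso].
  assert (Hmono := solution_nondecreasing psi m Hs Hm Hpos Hle).
  destruct (is_lim_seq_0_eventually_lt _ (psi (S m) ^ 2) Hl ltac:(nra)) as [M HM].
  assert (Hge : psi (S m) <= psi (S (m + M))).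
  { apply (le_from_nondecreasing psi (S m)); [|lia].
    intros n Hn; apply Hmono; lia. }
  specialize (HM (S (m + M)) ltac:(lia)). nra.
Qed.

Lemma decaying_solution_increases_neg (psi : nat -> R) (m : nat) :
  is_solution V psi -> is_lim_seq (fun n => psi n ^ 2) 0 ->
  (N <= m)%nat -> psi (S m) < 0 -> psi m < psi (S m).
Proof.
  intros Hs Hl Hm Hneg.
  assert (Hl' : is_lim_seq (fun n => (- psi n) ^ 2) 0).
  { eapply is_lim_seq_ext; [|exact Hl]. intros n; simpl; ring. }
  assert (X := decaying_solution_decreases (fun n => - psi n) m
                 (is_solution_opp V psi Hs) Hl' Hm ltac:(lra)).
  simpl in X; lra.
Qed.

Lemma decaying_solution_pos_succ (psi : nat -> R) (m : nat) :
  is_solution V psi -> is_lim_seq (fun n => psi n ^ 2) 0 ->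
  (N <= m)%nat -> 0 < psi m -> 0 < psi (S m).
Proof.
  intros Hs Hl Hm Hpos.
  destruct (Rtotal_order (psi (S m)) 0) as [Hneg|[Hzero|Hpos']]; [exfalso|exfalso|exact Hpos'].
  - assert (X := decaying_solution_increases_neg psi m Hs Hl Hm Hneg). lra.
  - (* a zero at [m + 1] forces [psi (m + 2) = - psi m < 0], which cannot grow back *)
    assert (E := is_solution_step V psi Hs m). rewrite Hzero in E.
    assert (X := decaying_solution_increases_neg psi (S m) Hs Hl ltac:(lia)
                   ltac:(lra)).
    lra.
Qed.

Lemma decaying_solution_pos_decreasing (psi : nat -> R) (m : nat) :
  is_solution V psi -> is_lim_seq (fun n => psi n ^ 2) 0 ->
  (N <= m)%nat -> 0 < psi m ->
  forall n, (m <= n)%nat -> 0 < psi (S n) < psi n.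
Proof.
  intros Hs Hl Hm Hpos.
  assert (Hall : forall n, (m <= n)%nat -> 0 < psi (S n)).
  { intros n Hn; induction Hn as [|n Hn IH].
    - exact (decaying_solution_pos_succ psi m Hs Hl Hm Hpos).
    - exact (decaying_solution_pos_succ psi (S n) Hs Hl ltac:(lia) IH). }
  intros n Hn. split; [now apply Hall|].
  apply (decaying_solution_decreases psi n Hs Hl ltac:(lia)), Hall, Hn.
Qed.

End NonnegativePotential.

Lemma green_diag (pp pm : nat -> R) (n : nat) : green pp pm n n = pp n * pm n.
Proof. unfold green; rewrite Nat.min_id, Nat.max_id; reflexivity. Qed.

Lemma green_opp (pp pm : nat -> R) (j k : nat) :
  green (fun n => - pp n) (fun n => - pm n) j k = green pp pm j k.
Proof. unfold green; ring. Qed.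

Lemma green_diag_wronskian (V pp pm : nat -> R) (n : nat) :
  is_solution V pp ->
  (forall n, pm n * pp (S n) - pm (S n) * pp n = 1) ->
  (V (S n) + 2) * (pp (S n) * pm (S n)) = 1 + pp (S n) * pm (S (S n)) + pm (S n) * pp n.
Proof.
  intros Hs HW. specialize (HW (S n)).
  rewrite (is_solution_step V pp Hs n) in HW. lra.
Qed.

Lemma K_A_ge (C : R) : 0 < C -> 1 + 2 / (C * (C + 3)) <= K_A C.
Proof.
  intros HC. unfold K_A.
  assert (1 <= sqrt (1 + (2 / (C * (C + 2))) ^ 2)).
  { rewrite <- sqrt_1 at 1. apply sqrt_le_1_alt.
    assert (0 <= (2 / (C * (C + 2))) ^ 2) by apply pow2_ge_0. lra. }
  assert (2 / (C * (C + 3)) <= 2 / (C * (C + 2))).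
  { unfold Rdiv. apply Rmult_le_compat_l; [lra|]. apply Rinv_le_contravar; nra. }
  lra.
Qed.

Lemma green_diag_bounds (C v p m p' m' : R) :
  0 < C -> C < v -> 0 < p -> 0 < m -> 0 <= p' -> 0 <= m' ->
  (1 + C) * p' <= p -> (1 + C) * m' <= m ->
  (v + 2) * (p * m) = 1 + p * m' + m * p' ->
  1 <= (v + 2) * (p * m) <= K_A C.
Proof.
  intros HC Hv Hp Hm Hp' Hm' Hpp Hmm E.
  set (x := (v + 2) * (p * m)) in *.
  split; [nra|].
  (* [x - 1 <= 2 p m / (1 + C) = 2 x / ((1 + C) (v + 2))], and [v > C] *)
  assert (Hx : (1 + C) * (x - 1) <= 2 * (p * m)) by nra.
  assert ((x - 1) * (C * (C + 3)) <= 2).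
  { assert ((1 + C) * (x - 1) * (v + 2) <= 2 * x) by (unfold x in *; nra).
    assert (0 <= x - 1) by nra. nra. }
  assert (x - 1 <= 2 / (C * (C + 3))) by (apply Rle_div_r; nra).
  assert (X := K_A_ge C HC). lra.
Qed.

Section GreenDiagonal.

Variables (V pp pm : nat -> R) (C : R) (N : nat).
Hypothesis C_pos : 0 < C.
Hypothesis V_gt : forall n, (N <= n)%nat -> C < V n.
Hypothesis pm_solution : is_solution V pm.
Hypothesis pp_solution : is_solution V pp.
Hypothesis wronskian : forall n, pm n * pp (S n) - pm (S n) * pp n = 1.
Hypothesis pm_square_lim : is_lim_seq (fun n => pm n ^ 2) 0.
Hypothesis pm_decreasing : forall n, (N <= n)%nat -> 0 < pm (S n) < pm n.

Lemma pp_pos_succ (n : nat) : (N <= n)%nat -> 0 <= pp n -> 0 < pp (S n).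
Proof.
  intros Hn Hpp. assert (W := wronskian n). destruct (pm_decreasing n Hn).
  destruct (Rlt_le_dec 0 (pp (S n))) as [h|h]; [exact h|nra].
Qed.

Lemma pp_eventually_pos : exists M, (N <= M)%nat /\ forall n, (M <= n)%nat -> 0 < pp n.
Proof.
  assert (Hnn : exists M, (N <= M)%nat /\ 0 <= pp M).
  { apply NNPP; intros Hno.
    assert (Hneg : forall n, (N <= n)%nat -> pp n < 0).
    { intros n Hn. apply Rnot_le_lt; intros h. apply Hno; eauto. }
    (* otherwise [- pp] is decreasing while the Wronskian gives [pm (n+1) * (- pp n) >= 1] *)
    apply (no_inverse_lower_bound (fun n => pm (S n)) (fun n => - pp n) N).
    - now apply is_lim_seq_incr_1 in pm_square_lim.
    - intros n Hn; destruct (pm_decreasing n Hn); lra.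
    - intros n Hn. assert (W := wronskian n).
      assert (X := Hneg (S n) ltac:(lia)). assert (Y := Hneg n Hn).
      destruct (pm_decreasing n Hn). nra.
    - intros n Hn. assert (W := wronskian n).
      assert (X := Hneg (S n) ltac:(lia)). destruct (pm_decreasing n Hn). nra. }
  destruct Hnn as [M [HM Hpp]]. exists (S M); split; [lia|].
  intros n Hn; induction Hn as [|n Hn IH].
  - exact (pp_pos_succ M HM Hpp).
  - apply pp_pos_succ; [lia|lra].
Qed.

Lemma pp_eventually_nondecreasing :
  exists m, (N <= m)%nat /\ 0 < pp (S m) /\ pp m <= pp (S m).
Proof.
  destruct pp_eventually_pos as [M [HM Hpos]].
  apply NNPP; intros Hno.
  assert (Hdec : forall n, (M <= n)%nat -> pp (S n) < pp n).
  { intros n Hn. apply Rnot_le_lt; intros h. apply Hno.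
    exists n; repeat split; [lia|apply Hpos; lia|exact h]. }
  (* a decreasing [pp] would keep [pm n >= 1 / pp (n+1)] bounded away from 0 *)
  apply (no_inverse_lower_bound pm (fun n => pp (S n)) M pm_square_lim).
  - intros n Hn; destruct (pm_decreasing n ltac:(lia)); lra.
  - intros n Hn; apply Rlt_le, Hdec; lia.
  - intros n Hn. assert (W := wronskian n).
    assert (X := Hpos n Hn). destruct (pm_decreasing n ltac:(lia)). nra.
Qed.

Lemma green_diag_eventually_bounded :
  exists M, forall n, (M <= n)%nat -> 1 <= (V n + 2) * green pp pm n n <= K_A C.
Proof.
  destruct pp_eventually_nondecreasing as [m [Hm [Hpos Hle]]].
  assert (Hmono := solution_nondecreasing V N
                     ltac:(intros n Hn; specialize (V_gt n Hn); lra)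
                     pp m pp_solution Hm Hpos Hle).
  exists (S (S m)); intros n Hn.
  destruct n as [|k]; [lia|]. rewrite green_diag.
  destruct k as [|j]; [lia|].
  destruct (Hmono j ltac:(lia)) as [Hj1 Hj2].
  destruct (Hmono (S j) ltac:(lia)) as [Hk1 _].
  destruct (pm_decreasing (S (S j)) ltac:(lia)).
  destruct (pm_decreasing (S (S (S j))) ltac:(lia)).
  assert (Gp := solution_growth_factor V pp j pp_solution Hj2).
  assert (Dm := solution_decay_factor V pm (S (S j)) pm_solution ltac:(lra)).
  assert (V1 := V_gt (S j) ltac:(lia)). assert (V3 := V_gt (S (S (S j))) ltac:(lia)).
  apply (green_diag_bounds C (V (S (S j))) _ _ (pp (S j)) (pm (S (S (S j))))); try lra.
  - apply V_gt; lia.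
  - nra.
  - nra.
  - exact (green_diag_wronskian V pp pm (S j) pp_solution wronskian).
Qed.

End GreenDiagonal.

Lemma Sz_shape_bounds (r s K : R) :
  0 < s -> 0 <= r -> 1 <= r * s <= K ->
  (r + sqrt (4 + r ^ 2)) / (2 * K) <= (1 + sqrt (1 + 4 * s ^ 2)) / (2 * s) <=
  (r + sqrt (4 + r ^ 2)) / 2.
Proof.
  intros Hs Hr [H1 HK].
  set (Q := sqrt (1 + 4 * s ^ 2)).
  assert (HQ : 0 <= Q) by apply sqrt_pos.
  assert (EB : s * sqrt (4 + r ^ 2) = sqrt (4 * s ^ 2 + (r * s) ^ 2)).
  { rewrite <- (sqrt_pow2 s) at 1 by lra. rewrite <- sqrt_mult by nra.
    f_equal; ring. }
  assert (Hlow : Q <= s * sqrt (4 + r ^ 2)).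
  { rewrite EB. apply sqrt_le_1_alt. nra. }
  assert (Hupp : s * sqrt (4 + r ^ 2) <= K * Q).
  { rewrite EB. unfold Q. rewrite <- (sqrt_pow2 K) at 1 by lra.
    rewrite <- sqrt_mult by nra. apply sqrt_le_1_alt.
    assert ((r * s) ^ 2 <= K ^ 2) by nra. assert (1 <= K ^ 2) by nra. nra. }
  split.
  - assert (E : (1 + Q) / (2 * s) - (r + sqrt (4 + r ^ 2)) / (2 * K)
                = ((1 + Q) * K - (r * s + s * sqrt (4 + r ^ 2))) / (2 * K * s))
      by (field; lra).
    assert (0 <= ((1 + Q) * K - (r * s + s * sqrt (4 + r ^ 2))) / (2 * K * s))
      by (apply Rdiv_le_0_compat; nra).
    lra.
  - assert (E : (r + sqrt (4 + r ^ 2)) / 2 - (1 + Q) / (2 * s)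
                = (r * s + s * sqrt (4 + r ^ 2) - (1 + Q)) / (2 * s))
      by (field; lra).
    assert (0 <= (r * s + s * sqrt (4 + r ^ 2) - (1 + Q)) / (2 * s))
      by (apply Rdiv_le_0_compat; nra).
    lra.
Qed.

Lemma Sz_bounds (pp pm : nat -> R) (a b K : R) (n : nat) :
  0 < a -> 0 < b ->
  1 <= a * green pp pm n n <= K -> 1 <= b * green pp pm (n - 1) (n - 1) <= K ->
  (sqrt (a * b) + sqrt (4 + a * b)) / (2 * K) <= Sz pp pm n <=
  (sqrt (a * b) + sqrt (4 + a * b)) / 2.
Proof.
  intros Ha Hb HG HG'. unfold Sz, zseq; cbv zeta.
  set (G := green pp pm n n) in *. set (G' := green pp pm (n - 1) (n - 1)) in *.
  assert (EG : sqrt G ^ 2 = G) by (apply pow2_sqrt; nra).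
  assert (EG' : sqrt G' ^ 2 = G') by (apply pow2_sqrt; nra).
  assert (Er : sqrt (a * b) ^ 2 = a * b) by (apply pow2_sqrt; nra).
  assert (Ers : sqrt (a * b) * (sqrt G * sqrt G') = sqrt ((a * G) * (b * G'))).
  { rewrite <- !sqrt_mult by nra. f_equal; ring. }
  replace (4 + a * b) with (4 + sqrt (a * b) ^ 2) by (rewrite Er; ring).
  replace (4 * sqrt G ^ 2 * sqrt G' ^ 2) with (4 * (sqrt G * sqrt G') ^ 2) by ring.
  replace (2 * sqrt G * sqrt G') with (2 * (sqrt G * sqrt G')) by ring.
  apply Sz_shape_bounds.
  - apply Rmult_lt_0_compat; apply sqrt_lt_R0; nra.
  - apply sqrt_pos.
  - rewrite Ers. split.
    + rewrite <- sqrt_1. apply sqrt_le_1_alt. nra.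
    + rewrite <- (sqrt_pow2 K) by lra. apply sqrt_le_1_alt. nra.
Qed.

Lemma green_diag_eventually_bounded_of_pos (V pp pm : nat -> R) (C : R) (N M : nat) :
  0 < C -> (forall n, (N <= n)%nat -> C < V n) ->
  is_solution V pm -> is_solution V pp ->
  (forall n, pm n * pp (S n) - pm (S n) * pp n = 1) ->
  is_lim_seq (fun n => pm n ^ 2) 0 ->
  (N <= M)%nat -> 0 < pm M ->
  exists N', forall n, (N' <= n)%nat -> 1 <= (V n + 2) * green pp pm n n <= K_A C.
Proof.
  intros HC HV Hsm Hsp HW Hl HM Hpos.
  assert (HV0 : forall n, (N <= n)%nat -> 0 <= V n)
    by (intros n Hn; specialize (HV n Hn); lra).
  apply (green_diag_eventually_bounded V pp pm C M); auto.
  - intros n Hn; apply HV; lia.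
  - exact (decaying_solution_pos_decreasing V N HV0 pm M Hsm Hl HM Hpos).
Qed.

Theorem lemma3 (V psip psim : nat -> R) (C : R) :
  0 < C ->
  Rbar_lt (Finite C) (LimInf_seq V) ->
  is_solution V psim ->
  (exists n, psim n <> 0) ->
  ex_series (fun n => (psim n) ^ 2) ->
  is_solution V psip ->
  (forall n : nat, psim n * psip (S n) - psim (S n) * psip n = 1) ->
  exists N : nat, forall n : nat, (N <= n)%nat ->
    1 / (V n + 2) <= green psip psim n n <= K_A C / (V n + 2) /\
    (sqrt ((V n + 2) * (V (n - 1)%nat + 2)) + sqrt (4 + (V n + 2) * (V (n - 1)%nat + 2)))
      / (2 * K_A C) <= Sz psip psim n <=
    (sqrt ((V n + 2) * (V (n - 1)%nat + 2)) + sqrt (4 + (V n + 2) * (V (n - 1)%nat + 2))) / 2.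
Proof.
  intros HC HL Hsm _ Hser Hsp HW.
  destruct (eventually_gt_of_LimInf_gt V C HL) as [N0 HV].
  assert (Hl := ex_series_lim_0 _ Hser).
  (* the Wronskian keeps [psim] from vanishing at two consecutive sites *)
  assert (HM : exists M, (N0 <= M)%nat /\ psim M <> 0).
  { destruct (Req_dec (psim N0) 0) as [h|h]; [|exists N0; auto].
    exists (S N0); split; [lia|]. intros h'. specialize (HW N0). rewrite h, h' in HW. lra. }
  destruct HM as [M [HM Hnz]].
  assert (Hbound : exists N, forall n, (N <= n)%nat ->
                     1 <= (V n + 2) * green psip psim n n <= K_A C).
  { destruct (Rdichotomy _ _ Hnz) as [Hneg|Hpos].
    - setoid_rewrite <- green_opp.
      apply (green_diag_eventually_bounded_of_pos V _ _ C N0 M HC HV);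
        try apply is_solution_opp; auto; try lra.
      + intros n; rewrite <- (HW n); ring.
      + eapply is_lim_seq_ext; [|exact Hl]. intros n; simpl; ring.
    - exact (green_diag_eventually_bounded_of_pos V psip psim C N0 M HC HV
               Hsm Hsp HW Hl HM Hpos). }
  destruct Hbound as [N HN]. exists (S (N + N0)); intros n Hn.
  assert (V1 := HV n ltac:(lia)). assert (V2 := HV (n - 1)%nat ltac:(lia)).
  assert (G1 := HN n ltac:(lia)). assert (G2 := HN (n - 1)%nat ltac:(lia)).
  split.
  - set (G := green psip psim n n) in *.
    split; [apply (Rle_div_l 1 G) | apply (Rle_div_r G)]; lra.
  - apply Sz_bounds; lra.
Qed.
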